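(* For every $\beta\geq 1$, $$\lim_{\eta\to\infty}\ \sup_{t\in\mathbb{R}^+}\ \left|p_{\mathrm{W}_1}(t\mid\beta,\eta)-f_{\mathrm{W}}(t\mid\beta,\eta)\right|=0.$$
   Context: For $\eta>0$, $\beta>0$, $f_{\mathrm{W}}(t\mid\beta,\eta)=\frac{\beta}{\eta}\left(\frac{t}{\eta}\right)^{\beta-1}\exp[-(t/\eta)^\beta]$ for $t>0$ (and $0$ at $t=0$ when $\beta>1$; equal to $1/\eta$ at $t=0$ when $\beta=1$) is the density of the continuous Weibull distribution $\mathrm{W}(\eta,\beta)$. The probability mass function of the Weibull-1 distribution $\mathrm{W}_1(\eta,\beta)$ is $p_{\mathrm{W}_1}(n\mid\beta,\eta)=\exp[-((n-1)/\eta)^\beta]-\exp[-(n/\eta)^\beta]=\int_{n-1}^{n}f_{\mathrm{W}}(s\mid\beta,\eta)\,ds$ for integers $n\geq1$; it is extended to real $t\geq 0$ by setting $p_{\mathrm{W}_1}(t\mid\beta,\eta)=p_{\mathrm{W}_1}(n\mid\beta,\eta)$ for $t\in(n-1,n]$ (and, say, $p_{\mathrm{W}_1}(0\mid\beta,\eta)=p_{\mathrm{W}_1}(1\mid\beta,\eta)$), as done in the paper's argument. *)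

From Stdlib Require Import Reals.
From Coquelicot Require Import Coquelicot.
Open Scope R_scope.

(* x ^ b for x >= 0 and b > 0, with 0 ^ b = 0 (Stdlib's Rpower 0 b = 1). *)
Definition rpow0 (x b : R) : R :=
  if Req_EM_T x 0 then 0 else Rpower x b.

Definition f_W (beta eta t : R) : R :=
  if Rlt_dec 0 t then
    beta / eta * Rpower (t / eta) (beta - 1) * exp (- Rpower (t / eta) beta)
  else if Req_EM_T beta 1 then 1 / eta else 0.

Definition p_W1_nat (beta eta : R) (n : Z) : R :=
  exp (- rpow0 ((IZR n - 1) / eta) beta) - exp (- rpow0 (IZR n / eta) beta).

(* ceiling of t: the integer n with n - 1 < t <= n *)
Definition ceilZ (t : R) : Z := (- Int_part (- t))%Z.

(* extension to real t >= 0: value at n for t in (n-1, n], and p(0) = p(1) *)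
Definition p_W1 (beta eta t : R) : R :=
  p_W1_nat beta eta (Z.max 1 (ceilZ t)).

(* Both [p_W1] and [f_W] are bounded by [beta / eta] uniformly in [t], so the
   supremum of their difference is at most [2 beta / eta].  For [f_W] this is
   [c^(beta-1) e^(-c^beta) <= (1 + c^beta) e^(-c^beta) <= 1]; for [p_W1] it is
   the mean value theorem applied to the survival function [exp (- x^beta)],
   whose derivative is [beta] times the same bounded quantity. *)
From Stdlib Require Import Reals Lra Lia.
From Coquelicot Require Import Coquelicot.
Open Scope R_scope.

Lemma exp_le_exp x y : x <= y -> exp x <= exp y.
Proof.
  intros [lt_xy | ->]; [left; apply exp_increasing, lt_xy | right; reflexivity].
Qed.

Lemma exp_opp_le_1 u : 0 <= u -> exp (- u) <= 1.
Proof. intros u_ge0; rewrite <- exp_0; apply exp_le_exp; lra. Qed.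

Lemma one_plus_mul_exp_opp_le_1 u : (1 + u) * exp (- u) <= 1.
Proof.
  assert (exp_inv : exp u * exp (- u) = 1).
  { rewrite <- exp_plus, Rplus_opp_r; apply exp_0. }
  pose proof (exp_ineq1_le u); pose proof (exp_pos (- u)); nra.
Qed.

Lemma Rpower_1_l e : Rpower 1 e = 1.
Proof. unfold Rpower; rewrite ln_1, Rmult_0_r; apply exp_0. Qed.

Lemma Rpower_le_1 c e : 0 < c <= 1 -> 0 <= e -> Rpower c e <= 1.
Proof.
  intros c_range e_ge0; rewrite <- (Rpower_1_l e); apply Rle_Rpower_l; lra.
Qed.

Lemma Rpower_le_self c b : 0 < c <= 1 -> 1 <= b -> Rpower c b <= c.
Proof.
  intros c_range b_ge1.
  replace (Rpower c b) with (Rpower c (b - 1) * c).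
  - pose proof (Rpower_le_1 c (b - 1) c_range ltac:(lra)); nra.
  - replace b with ((b - 1) + 1) at 2 by ring.
    rewrite Rpower_plus; f_equal.
    unfold Rpower; rewrite Rmult_1_l, exp_ln; lra.
Qed.

Lemma Rpower_pred_le c b : 0 < c -> 1 <= b -> Rpower c (b - 1) <= 1 + Rpower c b.
Proof.
  intros c_gt0 b_ge1; pose proof (exp_pos (b * ln c)).
  destruct (Rle_dec c 1) as [c_le1 | c_gt1].
  - pose proof (Rpower_le_1 c (b - 1) ltac:(lra) ltac:(lra)); unfold Rpower in *; lra.
  - pose proof (Rle_Rpower c (b - 1) b ltac:(lra) ltac:(lra)); unfold Rpower in *; lra.
Qed.

(* [f_W] is [beta / eta] times this quantity evaluated at [c = t / eta]. *)
Lemma weibull_kernel_bounds c b : 0 < c -> 1 <= b ->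
  0 <= Rpower c (b - 1) * exp (- Rpower c b) <= 1.
Proof.
  intros c_gt0 b_ge1; split.
  - apply Rmult_le_pos; left; [apply exp_pos | apply exp_pos].
  - eapply Rle_trans; [| apply (one_plus_mul_exp_opp_le_1 (Rpower c b))].
    apply Rmult_le_compat_r; [left; apply exp_pos | apply Rpower_pred_le; lra].
Qed.

Lemma one_sub_exp_opp_Rpower_le y b : 0 < y -> 1 <= b ->
  1 - exp (- Rpower y b) <= b * y.
Proof.
  intros y_gt0 b_ge1; destruct (Rle_dec y 1) as [y_le1 | y_gt1].
  - pose proof (exp_ineq1_le (- Rpower y b)).
    pose proof (Rpower_le_self y b ltac:(lra) b_ge1); nra.
  - pose proof (exp_pos (- Rpower y b)); nra.
Qed.

Lemma survival_lipschitz b x y : 1 <= b -> 0 <= x <= y ->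
  Rabs (exp (- rpow0 x b) - exp (- rpow0 y b)) <= b * (y - x).
Proof.
  intros b_ge1 [x_ge0 x_le_y].
  destruct (Req_dec x y) as [<- | x_neq_y].
  { rewrite Rminus_diag, Rabs_R0; lra. }
  unfold rpow0; destruct (Req_EM_T y 0) as [y_eq0 | _]; [lra |].
  destruct (Req_EM_T x 0) as [-> | x_neq0].
  - rewrite Ropp_0, exp_0, Rminus_0_r, Rabs_pos_eq.
    + apply one_sub_exp_opp_Rpower_le; lra.
    + pose proof (exp_opp_le_1 (Rpower y b) ltac:(left; apply exp_pos)); lra.
  - destruct (MVT_cor2 (fun z => exp (- Rpower z b))
      (fun z => - b * (Rpower z (b - 1) * exp (- Rpower z b))) x y)
      as [c [mvt c_range]]; [lra | |].
    { intros c c_range.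
      replace (- b * (Rpower c (b - 1) * exp (- Rpower c b)))
        with (exp (- Rpower c b) * - (b * Rpower c (b - 1))) by ring.
      apply (derivable_pt_lim_comp (fun z => - Rpower z b) exp).
      - apply derivable_pt_lim_opp, derivable_pt_lim_power; lra.
      - apply derivable_pt_lim_exp. }
    cbv beta in mvt; rewrite Rabs_minus_sym, mvt, Rabs_mult, Rabs_mult.
    rewrite Rabs_Ropp, (Rabs_pos_eq b), (Rabs_pos_eq (y - x)) by lra.
    pose proof (weibull_kernel_bounds c b ltac:(lra) b_ge1).
    rewrite Rabs_pos_eq by lra.
    apply Rmult_le_compat_r; [lra |]; nra.
Qed.

Lemma Rabs_p_W1_le beta eta t : 1 <= beta -> 0 < eta ->
  Rabs (p_W1 beta eta t) <= beta / eta.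
Proof.
  intros beta_ge1 eta_gt0; unfold p_W1, p_W1_nat.
  set (n := Z.max 1 (ceilZ t)).
  assert (n_ge1 : 1 <= IZR n) by (apply IZR_le; unfold n; lia).
  replace (beta / eta) with (beta * (IZR n / eta - (IZR n - 1) / eta))
    by (field; lra).
  apply survival_lipschitz; [exact beta_ge1 | split].
  - apply Rdiv_le_0_compat; lra.
  - apply Rmult_le_compat_r; [left; apply Rinv_0_lt_compat |]; lra.
Qed.

Lemma Rabs_f_W_le beta eta t : 1 <= beta -> 0 < eta ->
  Rabs (f_W beta eta t) <= beta / eta.
Proof.
  intros beta_ge1 eta_gt0.
  assert (ratio_gt0 : 0 < beta / eta) by (apply Rdiv_lt_0_compat; lra).
  unfold f_W; destruct (Rlt_dec 0 t) as [t_gt0 | _].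
  - pose proof (weibull_kernel_bounds (t / eta) beta
      ltac:(apply Rdiv_lt_0_compat; lra) beta_ge1).
    rewrite Rabs_pos_eq; nra.
  - destruct (Req_EM_T beta 1) as [-> | _].
    + rewrite Rabs_pos_eq; lra.
    + rewrite Rabs_R0; lra.
Qed.

Lemma Lub_Rbar_between (E : R -> Prop) A B :
  (exists a, E a) -> (forall y, E y -> A <= y <= B) ->
  is_finite (Lub_Rbar E) /\ A <= real (Lub_Rbar E) <= B.
Proof.
  intros [a Ea] E_between; destruct (Lub_Rbar_correct E) as [ub lub].
  assert (lub_le_B : Rbar_le (Lub_Rbar E) B).
  { apply lub; intros y Ey; apply E_between, Ey. }
  assert (a_le_lub : Rbar_le a (Lub_Rbar E)) by (apply ub; exact Ea).
  pose proof (E_between a Ea).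
  destruct (Lub_Rbar E) as [l | |]; simpl in *; try tauto.
  split; [reflexivity | lra].
Qed.

Lemma is_lim_squeeze_inv (g : R -> R) C :
  (forall x, 0 < x -> 0 <= g x <= C / x) -> is_lim g p_infty 0.
Proof.
  intros g_bounds; apply (is_lim_le_le_loc (fun _ => 0) (fun x => C / x)).
  - exists 0; intros x x_gt0; apply g_bounds; lra.
  - apply is_lim_const.
  - replace (Finite 0) with (Rbar_mult C (Rbar_inv p_infty))
      by (simpl; f_equal; ring).
    apply is_lim_scal_l, is_lim_inv; [apply is_lim_id | discriminate].
Qed.

Theorem proposition3 (beta : R) (hbeta : 1 <= beta) :
  let S := fun eta => Lub_Rbar (fun y => exists t, 0 <= t /\
                  y = Rabs (p_W1 beta eta t - f_W beta eta t)) in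
  (exists M, forall eta, M < eta -> is_finite (S eta)) /\
  is_lim (fun eta => real (S eta)) p_infty 0.
Proof.
  intros S.
  assert (S_bounds : forall eta, 0 < eta ->
    is_finite (S eta) /\ 0 <= real (S eta) <= 2 * beta / eta).
  { intros eta eta_gt0; apply Lub_Rbar_between.
    - exists (Rabs (p_W1 beta eta 0 - f_W beta eta 0)), 0.
      split; [lra | reflexivity].
    - intros y [t [_ ->]]; split; [apply Rabs_pos |].
      eapply Rle_trans; [apply Rabs_triang |]; rewrite Rabs_Ropp.
      pose proof (Rabs_p_W1_le beta eta t hbeta eta_gt0).
      pose proof (Rabs_f_W_le beta eta t hbeta eta_gt0).
      replace (2 * beta / eta) with (beta / eta + beta / eta) by (field; lra).
      lra. }
  split.
  - exists 0; intros eta eta_gt0; apply S_bounds, eta_gt0.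
  - apply (is_lim_squeeze_inv _ (2 * beta)); intros eta eta_gt0.
    apply S_bounds, eta_gt0.
Qed.
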